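(* The greedy algorithm Degree (with $r=1$) is not an approximation algorithm for Minimum Congestion Dominating Set: for every real $c\ge 1$ there exist a graph $G$ and an execution of Degree on $G$ (i.e., a choice of tie-breaking) whose output $D$ satisfies $\overline{\mathrm{cong}}(D)>c\cdot\mathrm{mac}(G)$. In fact, for every $k\ge 2$, on the graph obtained from the complete bipartite graph $K_{k,k}$ with sides $A,B$ by attaching one pendant leaf to each vertex of $A\cup B$ (so $n=4k$), some execution outputs $D=A\cup B$ with $\overline{\mathrm{cong}}(D)=n/8+1$, while $\mathrm{mac}(G)=1$.
   Context: For $r=1$: a dominating set of $G=(V,E)$ is $D\subseteq V$ with $N[D]=V$ ($N[\cdot]$ closed neighborhood). The average congestion of $S$ is $\overline{\mathrm{cong}}(S)=\frac{1}{|V|}\sum_{x\in V}|N[x]\cap S|$ and $\mathrm{mac}(G)$ is its minimum over dominating sets. The algorithm Degree starts with $D=\emptyset$ and, while $N[D]\ne V$, adds to $D$ a vertex $v$ maximizing $|N[v]\setminus N[D]|$, breaking ties arbitrarily; it outputs $D$. *)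

From HB Require Import structures.
From mathcomp Require Import all_boot all_order all_algebra.
From mathcomp Require Import reals.
Set Implicit Arguments. Unset Strict Implicit. Unset Printing Implicit Defensive.
Import Order.TTheory GRing.Theory Num.Theory.
Local Open Scope ring_scope.

Section Graphs.
Variable T : finType.
Variable e : rel T.

Definition Nc (x : T) : {set T} := [set y | (y == x) || e x y].
Definition NS (S : {set T}) : {set T} := \bigcup_(x in S) Nc x.

Definition dominating (D : {set T}) : bool := NS D == [set: T].

Definition cong (S : {set T}) : rat :=
  (#|T|%:R)^-1 * \sum_(x : T) (#|Nc x :&: S|)%:R.

(* mac(G): minimum average congestion over dominating sets
   ([set: T] is always dominating, so it serves as the neutral start). *)
Definition mac : rat :=
  \big[Num.min/cong [set: T]]_(S : {set T} | dominating S) cong S.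

Definition gain (D : {set T}) (v : T) : nat := #|Nc v :\: NS D|.

(* s is the sequence of vertices picked by some execution of Degree
   (some tie-breaking): at each step the current set is not dominating and the
   chosen vertex maximizes the gain; at the end the set is dominating. *)
Definition degree_execution (s : seq T) : Prop :=
  (forall (p q : seq T) (v : T), s = p ++ v :: q ->
     ~~ dominating [set x in p] /\
     forall w : T, (gain [set x in p] w <= gain [set x in p] v)%N)
  /\ dominating [set x in s].

Definition degree_output (s : seq T) : {set T} := [set x in s].
End Graphs.

(* K_{k,k} with sides A = {((i,false),false)} and B = {((i,true),false)},
   plus a pendant leaf ((i,b),true) attached to each vertex ((i,b),false). *)
Definition kkl_vertex (k : nat) : finType := (('I_k * bool) * bool)%type.

Definition kkl_edge (k : nat) : rel (kkl_vertex k) :=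
  fun u v =>
    [|| [&& ~~ u.2, ~~ v.2 & u.1.2 != v.1.2]
      | (u.1 == v.1) && (u.2 != v.2)].

Definition kkl_core (k : nat) : {set kkl_vertex k} := [set v | ~~ v.2].

From HB Require Import structures.
From mathcomp Require Import all_boot all_order all_algebra.
From mathcomp Require Import reals ring lra zify.
Set Implicit Arguments. Unset Strict Implicit. Unset Printing Implicit Defensive.
Import Order.TTheory GRing.Theory Num.Theory.
Local Open Scope ring_scope.

(* On K_{k,k} with a pendant leaf at every core vertex, Degree may first pick a
   core vertex a0 (gain k+2, the maximum), then any vertex b0 of the other side
   (gain k, tied with the rest of that side since k >= 2).  From then on the
   whole core is covered, so every vertex has gain at most 1, while each core
   vertex not yet chosen still has gain 1 through its own leaf: the ties let
   Degree pick the entire core.  Every core vertex sees k+1 core vertices and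
   every leaf sees one, so the core has average congestion (k+2)/2 = n/8 + 1.
   The leaves, by contrast, dominate with congestion exactly 1, which is a lower
   bound for any dominating set.  Letting k grow defeats every ratio c. *)

Section Domination.
Variables (T : finType) (e : rel T).

Lemma mem_NS S y : (y \in NS e S) = [exists x in S, y \in Nc e x].
Proof.
apply/bigcupP/existsP => [[x xS yx]|[x /andP[xS yx]]]; exists x => //.
by rewrite xS.
Qed.

Lemma dominating_setT : dominating e [set: T].
Proof.
by apply/eqP/setP => x; rewrite inE mem_NS; apply/existsP; exists x; rewrite !inE eqxx.
Qed.

Lemma mac_le_cong S : dominating e S -> mac e <= cong e S.
Proof. by move=> dS; rewrite /mac (bigD1 S) //= ge_min lexx. Qed.

Lemma gain_le_card_Nc D v : (gain e D v <= #|Nc e v|)%N.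
Proof. exact/subset_leq_card/subsetDl. Qed.

Lemma gain_set0 v : gain e set0 v = #|Nc e v|.
Proof. by rewrite /gain /NS big_set0 setD0. Qed.

Definition greedy_step (D : {set T}) (v : T) : Prop :=
  ~~ dominating e D /\ forall w, (gain e D w <= gain e D v)%N.

Lemma degree_execution_greedy s :
  (forall p q v, s = p ++ v :: q -> greedy_step [set x in p] v) ->
  dominating e [set x in s] -> degree_execution e s.
Proof. by []. Qed.

Hypothesis e_sym : symmetric e.

(* With a symmetric relation, y lies in N[x] iff x lies in N[y], so domination
   says that every closed neighbourhood meets S. *)
Lemma cong_ge1 S : (0 < #|T|)%N -> dominating e S -> 1 <= cong e S.
Proof.
move=> T_gt0 /eqP dS.
have meet x : (1 <= #|Nc e x :&: S|)%N.
  have : x \in NS e S by rewrite dS inE.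
  rewrite mem_NS => /existsP[y /andP[yS]].
  rewrite !inE => xy; apply/card_gt0P; exists y; rewrite !inE yS andbT.
  by case/orP: xy => [/eqP->|exy]; rewrite ?eqxx // e_sym exy orbT.
have T_neq0 : (#|T|%:R : rat) != 0 by rewrite pnatr_eq0 -lt0n.
rewrite /cong -[X in X <= _](mulVf T_neq0) ler_pM2l ?invr_gt0 ?ltr0n //.
rewrite -sum1_card natr_sum; apply: ler_sum => x _.
by rewrite ler_nat meet.
Qed.

Lemma mac_ge1 : (0 < #|T|)%N -> 1 <= mac e.
Proof.
move=> T_gt0; rewrite /mac; apply: (big_ind (fun x => 1 <= x)).
- exact: cong_ge1 T_gt0 dominating_setT.
- by move=> x y hx hy; rewrite le_min hx hy.
- by move=> S; apply: cong_ge1.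
Qed.

End Domination.

Section KKL.
Variable k : nat.
Notation V := (kkl_vertex k).
Notation E := (@kkl_edge k).

Lemma kkl_sym : symmetric E.
Proof.
move=> [[i b] l] [[j c] m]; rewrite /kkl_edge /= !xpair_eqE.
by rewrite (eq_sym j) (eq_sym c) (eq_sym m) andbCA.
Qed.

Lemma kkl_irr : irreflexive E.
Proof. by move=> [[i b] l]; rewrite /kkl_edge /= !eqxx !andbF. Qed.

Lemma card_kkl : #|V| = (4 * k)%N.
Proof. by rewrite !card_prod card_ord card_bool -mulnA mulnC. Qed.

Definition side (b : bool) : {set V} := setX (setX [set: 'I_k] [set b]) [set false].

Lemma card_side b : #|side b| = k.
Proof. by rewrite !cardsX cardsT card_ord !cards1 !muln1. Qed.

Lemma Nc_leaf y : Nc E (y, true) = [set (y, true); (y, false)].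
Proof.
apply/setP => -[[j b] l]; case: y => i c; rewrite !inE /kkl_edge /= !xpair_eqE.
by case: l; case: b; case: c; rewrite /= ?andbT ?andbF ?orbF // eq_sym.
Qed.

Lemma Nc_core y : Nc E (y, false) = (y, true) |: ((y, false) |: side (~~ y.2)).
Proof.
apply/setP => -[[j b] l]; case: y => i c; rewrite !inE /kkl_edge /= !xpair_eqE.
by case: l; case: b; case: c; rewrite /= ?andbT ?andbF ?orbF ?orbT // eq_sym.
Qed.

Lemma card_Nc_core y : #|Nc E (y, false)| = k.+2.
Proof.
rewrite Nc_core !cardsU1 card_side !inE /= !xpair_eqE /=.
by case: y => i [] /=; rewrite ?andbF ?andbT.
Qed.

Lemma card_Nc_leaf y : #|Nc E (y, true)| = 2%N.
Proof. by rewrite Nc_leaf cards2 xpair_eqE eqxx. Qed.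

Lemma leaf_in_Nc w z : (z, true) \in Nc E w -> z = w.1.
Proof.
case: w => x []; rewrite ?Nc_leaf ?Nc_core !inE !xpair_eqE /=.
  by case/orP => /andP[/eqP].
by rewrite !andbF !orbF => /andP[/eqP].
Qed.

Lemma greedy_step_first y : greedy_step E set0 (y, false).
Proof.
split; first by apply/negP => /eqP/setP/(_ (y, false)); rewrite /NS big_set0 !inE.
by move=> [z []]; rewrite !gain_set0 ?card_Nc_leaf !card_Nc_core.
Qed.

Section SecondStep.
Variable i0 : 'I_k.
Notation a0 := ((i0, false), false).

Lemma Nc_opposite_diff i :
  Nc E ((i, true), false) :\: Nc E a0 = ((i, true), true) |: (side false :\ a0).
Proof.
rewrite !Nc_core; apply/setP => -[[j b] l]; rewrite !inE /= !xpair_eqE.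
by case: l; case: b; rewrite /= ?andbT ?andbF ?orbF ?orbT //= andbT.
Qed.

Lemma Nc_same_side_diff i :
  Nc E ((i, false), false) :\: Nc E a0 \subset [set ((i, false), true); ((i, false), false)].
Proof.
rewrite !Nc_core; apply/subsetP => -[[j b] l]; rewrite !inE /= !xpair_eqE.
by case: l; case: b; rewrite /= ?andbT ?andbF ?orbF ?orbT //= => /andP[].
Qed.

Lemma greedy_step_second : (2 <= k)%N -> greedy_step E [set a0] ((i0, true), false).
Proof.
move=> k_ge2; have NS_a0 : NS E [set a0] = Nc E a0 by rewrite /NS big_set1.
have card_rest : #|side false :\ a0|.+1 = k.
  by move: (card_side false); rewrite (cardsD1 a0) !inE eqxx.
have gain_opposite i : gain E [set a0] ((i, true), false) = k.
  by rewrite /gain NS_a0 Nc_opposite_diff cardsU1 !inE /= andbF add1n card_rest.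
split.
  apply/negP => /eqP; rewrite NS_a0 => /setP/(_ ((i0, true), true)).
  by rewrite Nc_core !inE /= !xpair_eqE /= !andbF.
move=> w; rewrite gain_opposite; case: w => -[i []] [].
- by apply: leq_trans (gain_le_card_Nc _ _ _) _; rewrite card_Nc_leaf.
- by rewrite gain_opposite.
- by apply: leq_trans (gain_le_card_Nc _ _ _) _; rewrite card_Nc_leaf.
- rewrite /gain NS_a0; apply: leq_trans (subset_leq_card (Nc_same_side_diff i)) _.
  by rewrite cards2; case: (_ != _) => //; apply: ltnW.
Qed.

End SecondStep.

Section CoreSubset.
Variable P : {set V}.
Hypothesis P_core : P \subset kkl_core k.

Lemma leaf_in_NS_core y : ((y, true) \in NS E P) = ((y, false) \in P).
Proof.
rewrite mem_NS; apply/existsP/idP => [[u /andP[uP /[dup] yu /leaf_in_Nc ->]]|yP].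
  by case: u uP yu => x l uP; have := subsetP P_core _ uP; rewrite inE => /negbTE <-.
by exists (y, false); rewrite yP Nc_core !inE eqxx.
Qed.

Variable i0 : 'I_k.
Hypotheses (a0P : ((i0, false), false) \in P) (b0P : ((i0, true), false) \in P).

(* A core vertex is adjacent to whichever of a0, b0 lies on the other side. *)
Lemma core_in_NS y : (y, false) \in NS E P.
Proof.
rewrite mem_NS; apply/existsP; exists ((i0, ~~ y.2), false).
by rewrite Nc_core !inE /= negbK; case: y => j []; rewrite ?a0P ?b0P eqxx !orbT.
Qed.

Lemma greedy_step_uncovered x : (x, false) \notin P -> greedy_step E P (x, false).
Proof.
move=> xP; have lx : (x, true) \notin NS E P by rewrite leaf_in_NS_core.
split; first by apply: contra lx => /eqP ->; rewrite inE.
move=> w; apply: (@leq_trans 1).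
  rewrite /gain -(cards1 (w.1, true)); apply: subset_leq_card.
  apply/subsetP => -[z []]; rewrite in_setD ?core_in_NS // => /andP[_].
  by move/leaf_in_Nc ->; rewrite inE.
by apply/card_gt0P; exists (x, true); rewrite in_setD lx Nc_core !inE eqxx.
Qed.

End CoreSubset.

Section Execution.
Variable i0 : 'I_k.
Hypothesis k_ge2 : (2 <= k)%N.
Notation a0 := ((i0, false), false).
Notation b0 := ((i0, true), false).

Definition core_rest : seq V :=
  [seq (x, false) | x <- enum [set x : 'I_k * bool | x.1 != i0]].

Definition core_seq : seq V := a0 :: b0 :: core_rest.

Let core_inj : injective (fun x : 'I_k * bool => (x, false) : V).
Proof. by move=> x y []. Qed.

Lemma mem_core_rest u : (u \in core_rest) = (u.1.1 != i0) && ~~ u.2.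
Proof.
case: u => y []; last by rewrite (mem_map core_inj) mem_enum inE andbT.
by rewrite andbF; apply/mapP => -[].
Qed.

Lemma mem_core_seq u : (u \in core_seq) = ~~ u.2.
Proof.
rewrite !in_cons mem_core_rest; case: u => -[j c] [] /=; rewrite !xpair_eqE ?andbF //.
by case: c; case: (j =P i0); rewrite ?orbT ?orbF.
Qed.

Lemma core_seq_uniq : uniq core_seq.
Proof.
rewrite /= !mem_core_rest /= !in_cons eqxx !xpair_eqE /= andbF /=.
by rewrite (map_inj_uniq core_inj) enum_uniq andbT mem_core_rest eqxx.
Qed.

Lemma core_seq_execution : degree_execution E core_seq.
Proof.
apply: degree_execution_greedy; last first.
  apply/eqP/setP => u; rewrite inE mem_NS; apply/existsP; exists (u.1, false).
  by rewrite inE mem_core_seq Nc_core; case: u => y [] /=; rewrite !inE eqxx ?orbT.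
move=> [|x1 [|x2 p]] q v /= [].
- move=> <- _; have -> : [set x in [::]] = set0 :> {set V}.
    by apply/setP => x; rewrite !inE.
  exact: greedy_step_first.
- move=> <- <- _; have -> : [set x in [:: a0]] = [set a0] :> {set V}.
    by apply/setP => x; rewrite !inE.
  exact: greedy_step_second.
move=> <- <- rest_eq; set P := [set x in [:: a0, b0 & p]].
have seq_eq : core_seq = [:: a0, b0 & p] ++ v :: q by rewrite /core_seq rest_eq.
have v_core : v = (v.1, false).
  have := mem_core_rest v; rewrite rest_eq mem_cat mem_head orbT.
  by move=> /esym/andP[_ /negbTE <-]; rewrite -surjective_pairing.
have P_core : P \subset kkl_core k.
  apply/subsetP => u; rewrite inE => up.
  by rewrite inE -mem_core_seq seq_eq mem_cat up.
have := core_seq_uniq; rewrite seq_eq cat_uniq => /and3P[_ /hasPn /(_ v (mem_head _ _))].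
rewrite v_core => vP _.
by apply: (greedy_step_uncovered P_core (i0 := i0)); rewrite ?inE ?mem_head ?in_cons ?eqxx ?orbT.
Qed.

Lemma core_seq_output : degree_output core_seq = kkl_core k.
Proof. by apply/setP => u; rewrite /degree_output inE [in RHS]inE mem_core_seq. Qed.

End Execution.

Lemma sum_kkl_by_leaf (g : bool -> nat) :
  (\sum_(u : V) g u.2 = (2 * k) * (g true + g false))%N.
Proof.
rewrite -(pair_bigA _ (fun _ b => g b)) /=.
under eq_bigr do rewrite big_bool /=.
by rewrite sum_nat_const card_prod card_ord card_bool [(k * 2)%N]mulnC.
Qed.

Lemma card_Nc_core_meet u : #|Nc E u :&: kkl_core k| = (if u.2 then 1 else k.+1)%N.
Proof.
case: u => y [].
  rewrite Nc_leaf (_ : _ :&: _ = [set (y, false)]) ?cards1 //.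
  by apply/setP => -[z []]; rewrite !inE !xpair_eqE /= ?andbF ?andbT ?orbF.
rewrite Nc_core (_ : _ :&: _ = (y, false) |: side (~~ y.2)).
  by rewrite cardsU1 card_side !inE /=; case: y => i [].
by apply/setP => -[z []]; rewrite !inE !xpair_eqE /= ?andbF ?andbT ?orbF.
Qed.

Definition leaves : {set V} := [set v | v.2].

Lemma card_Nc_leaves_meet u : #|Nc E u :&: leaves| = 1%N.
Proof.
rewrite (_ : _ :&: _ = [set (u.1, true)]) ?cards1 //.
case: u => y l; apply/setP => -[z m].
by case: l; rewrite ?Nc_leaf ?Nc_core !inE !xpair_eqE; case: m; rewrite /= ?andbF ?andbT ?orbF.
Qed.

Lemma dominating_leaves : dominating E leaves.
Proof.
apply/eqP/setP => u; rewrite inE mem_NS; apply/existsP; exists (u.1, true).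
by rewrite inE Nc_leaf; case: u => y [] /=; rewrite !inE eqxx ?orbT.
Qed.

Hypothesis k_gt0 : (0 < k)%N.

Lemma cong_core : cong E (kkl_core k) = (4 * k)%:R / 8%:R + 1.
Proof.
rewrite /cong card_kkl -natr_sum.
under eq_bigr do rewrite card_Nc_core_meet.
rewrite (sum_kkl_by_leaf (fun b => if b then 1 else k.+1)%N) -addn1 !natrM !natrD.
by field; rewrite pnatr_eq0 -lt0n.
Qed.

Lemma cong_leaves : cong E leaves = 1.
Proof.
rewrite /cong; under eq_bigr do rewrite card_Nc_leaves_meet.
by rewrite sumr_const card_kkl mulVf // pnatr_eq0 -lt0n muln_gt0.
Qed.

Lemma mac_kkl : mac E = 1.
Proof.
apply/eqP; rewrite eq_le -{1}cong_leaves mac_le_cong ?dominating_leaves //=.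
by apply: mac_ge1; [exact: kkl_sym | rewrite card_kkl muln_gt0].
Qed.

End KKL.

Lemma degree_kkl k : (2 <= k)%N ->
  exists s : seq (kkl_vertex k),
    [/\ degree_execution (@kkl_edge k) s,
        degree_output s = kkl_core k,
        cong (@kkl_edge k) (kkl_core k) = (4 * k)%:R / 8%:R + 1 &
        mac (@kkl_edge k) = 1].
Proof.
move=> k_ge2; have k_gt0 : (0 < k)%N by apply: ltnW.
exists (core_seq (Ordinal k_gt0)); split.
- exact: core_seq_execution.
- exact: core_seq_output.
- exact: cong_core.
- exact: mac_kkl.
Qed.

Theorem mainTheorem7 :
  (forall (R : realType) (c : R), 1 <= c ->
     exists (T : finType) (e : rel T) (s : seq T),
       [/\ symmetric e, irreflexive e, degree_execution e s &
           c * ratr (mac e) < ratr (cong e (degree_output s))])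
  /\
  (forall k : nat, (2 <= k)%N ->
     exists s : seq (kkl_vertex k),
       [/\ degree_execution (@kkl_edge k) s,
           degree_output s = kkl_core k,
           cong (@kkl_edge k) (kkl_core k) = (4 * k)%:R / 8%:R + 1 &
           mac (@kkl_edge k) = 1]).
Proof.
split; last exact: degree_kkl.
move=> R c c_ge1; set m := Num.Def.archi_bound c.
have c_lt_m : c < m%:R by apply: archi_boundP; apply: le_trans c_ge1.
have k_ge2 : (2 <= (2 * m).+2)%N by [].
have [s [exec out cong_out mac1]] := degree_kkl k_ge2.
exists (kkl_vertex (2 * m).+2), (@kkl_edge _), s.
split; [exact: kkl_sym | exact: kkl_irr | exact: exec |].
rewrite out cong_out mac1 rmorph1 mulr1 rmorphD rmorph1 fmorph_div !rmorph_nat.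
rewrite (_ : (4 * (2 * m).+2 = 8 * m.+1)%N); last by lia.
rewrite natrM mulrC mulKf ?pnatr_eq0 // -addn1 natrD.
lra.
Qed.
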